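(* Let $X$ be a nonempty set and $S$ a regular semigroup. Then every one-to-one mapping $\phi':X\to E(S)$ can be extended to a skeleton mapping $\phi:\Gamma(X)\to E(S^1)$ (i.e. $x\phi=x\phi'$ for all $x\in X$).
   Context: Let $1$ be a symbol not in $X$. Elements of height $\ge 2$ are triples $g=(g^l,g^c,g^r)$; $\Gamma_0(X)=\{1\}$, $\Gamma_1(X)=X$, each $x\in X$ identified with $(1,x,1)$; for $i\ge 2$, $\Gamma_i(X)$ is the set of triples $g\in\Gamma_{i-1}(X)\times\Gamma_{i-2}(X)\times\Gamma_{i-1}(X)$ with $g^l\neq g^r$ and $g^c\in\{(g^l)^l,(g^l)^r\}\cap\{(g^r)^l,(g^r)^r\}$; $\Gamma(X)=\bigcup_{i\ge0}\Gamma_i(X)$. $S^1$ is $S$ with an identity adjoined if necessary; $E(\cdot)$ is the set of idempotents. For idempotents $e,f$ of a semigroup $R$, $S(e,f)=\{h\in E(R): fh=h=he,\ ehf=ef\}$. A skeleton mapping is a mapping $\phi:\Gamma(X)\to E(S^1)$ such that (i) $\phi|_X$ is one-to-one with $X\phi\subseteq E(S)$; (ii) $(1\phi)(g\phi)=g\phi=(g\phi)(1\phi)$ for all $g\in X$; (iii) $g\phi\in S\big((g^r\phi)(g^c\phi),(g^c\phi)(g^l\phi)\big)$ (in $S^1$) for all $g\in\Gamma_i(X)$, $i\ge2$. *)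

(* Terms over X: [One] is the symbol 1, [Atom x] is x (identified with (1,x,1)),
   [Node l c r] is a triple (l,c,r). *)
Inductive term (X : Type) : Type :=
| One : term X
| Atom : X -> term X
| Node : term X -> term X -> term X -> term X.
Arguments One {X}.
Arguments Atom {X} _.
Arguments Node {X} _ _ _.

(* left / right components; for x in X, x = (1,x,1) so x^l = x^r = 1 *)
Definition tl {X} (t : term X) : term X :=
  match t with Node l _ _ => l | _ => One end.
Definition tr {X} (t : term X) : term X :=
  match t with Node _ _ r => r | _ => One end.

Fixpoint Gamma {X : Type} (i : nat) (t : term X) {struct i} : Prop :=
  match i with
  | 0 => t = One
  | S 0 => exists x, t = Atom x
  | S ((S k) as k1) =>
      match t with
      | Node l c r =>
          Gamma k1 l /\ Gamma k c /\ Gamma k1 r /\ l <> r /\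
          (c = tl l \/ c = tr l) /\ (c = tl r \/ c = tr r)
      | _ => False
      end
  end.

Definition GammaAll {X : Type} (t : term X) : Prop := exists i, Gamma i t.

Definition associative {S : Type} (mul : S -> S -> S) : Prop :=
  forall a b c, mul a (mul b c) = mul (mul a b) c.

Definition regular {S : Type} (mul : S -> S -> S) : Prop :=
  forall a, exists x, mul (mul a x) a = a.

Definition has_identity {S : Type} (mul : S -> S -> S) : Prop :=
  exists e, forall a, mul e a = a /\ mul a e = a.

(* S^1 is modelled inside [option S], where [None] is an adjoined identity:
   multiplication on option S with None as identity. *)
Definition mul1 {S : Type} (mul : S -> S -> S) (u v : option S) : option S :=
  match u, v with
  | None, _ => v
  | _, None => u
  | Some a, Some b => Some (mul a b)
  end.

(* Carrier of S^1: all of option S if S has no identity; otherwise only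
   the elements of S (identity adjoined only if necessary). *)
Definition inS1 {S : Type} (mul : S -> S -> S) (u : option S) : Prop :=
  match u with Some _ => True | None => ~ has_identity mul end.

Definition idemS1 {S : Type} (mul : S -> S -> S) (u : option S) : Prop :=
  inS1 mul u /\ mul1 mul u u = u.

Definition idem {S : Type} (mul : S -> S -> S) (a : S) : Prop := mul a a = a.

Definition sandwich {S : Type} (mul : S -> S -> S) (e f h : option S) : Prop :=
  idemS1 mul h /\ mul1 mul f h = h /\ h = mul1 mul h e /\
  mul1 mul (mul1 mul e h) f = mul1 mul e f.

Definition skeleton {X S : Type} (mul : S -> S -> S) (phi : term X -> option S) : Prop :=
  (forall g, GammaAll g -> idemS1 mul (phi g)) /\
  (forall x y : X, phi (Atom x) = phi (Atom y) -> x = y) /\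
  (forall x : X, exists a, phi (Atom x) = Some a /\ idem mul a) /\
  (forall x : X, mul1 mul (phi One) (phi (Atom x)) = phi (Atom x) /\
                 phi (Atom x) = mul1 mul (phi (Atom x)) (phi One)) /\
  (forall i g, 2 <= i -> Gamma i g ->
     sandwich mul (mul1 mul (phi (tr g)) (phi (match g with Node _ c _ => c | _ => One end)))
                  (mul1 mul (phi (match g with Node _ c _ => c | _ => One end)) (phi (tl g)))
                  (phi g)).

(* In a regular semigroup every product [e f] of idempotents has an inverse
   [y], and then [f y e] is an idempotent of the sandwich set [S(e, f)].  The
   skeleton map is therefore defined by recursion on terms, sending a triple
   [(l, c, r)] to such an element of [S(r c, c l)], computed in [S^1].  An
   element [h] of [S(r c, c l)] with [c] idempotent satisfies [h l h = h] and
   [h r h = h]; this invariant makes [r c] and [c l] idempotent at the next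
   level, so the recursion keeps producing sandwich elements. *)

From Corelib Require Import ssreflect.
From Stdlib Require Import Classical IndefiniteDescription Lia.

Set Implicit Arguments.
Unset Strict Implicit.

Section Semigroup.

Variables (M : Type) (m : M -> M -> M).
Hypothesis mA : associative m.

Local Infix "·" := m (at level 40, left associativity).

Definition in_sandwich (e f h : M) : Prop :=
  h · h = h /\ f · h = h /\ h · e = h /\ e · h · f = e · f.

Lemma regular_has_inverse :
  regular m -> forall a, exists y, a · y · a = a /\ y · a · y = y.
Proof.
move=> hreg a; have [x hx] := hreg a.
exists (x · a · x); split; first by rewrite !mA hx hx.
have -> : x · a · x · a · (x · a · x) = x · (a · x · a · x · a) · x by rewrite !mA.
by rewrite hx hx.
Qed.

Lemma in_sandwich_of_inverse e f y :
  e · e = e -> f · f = f ->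
  e · f · y · (e · f) = e · f -> y · (e · f) · y = y ->
  in_sandwich e f (f · y · e).
Proof.
move=> he hf hay hya; split; last split; last split.
- have -> : f · y · e · (f · y · e) = f · (y · (e · f) · y) · e by rewrite !mA.
  by rewrite hya.
- by rewrite !mA hf.
- by rewrite -mA he.
- have -> : e · (f · y · e) · f = e · f · y · (e · f) by rewrite !mA.
  exact: hay.
Qed.

Lemma in_sandwich_absorbs r c l h :
  c · c = c -> in_sandwich (r · c) (c · l) h -> h · l · h = h /\ h · r · h = h.
Proof.
move=> hc [hh [hF [hE _]]].
have hhc : h · c = h by rewrite -{1}hE -!mA hc hE.
have hch : c · h = h by rewrite -{1}hF !mA hc hF.
split.
- have -> : h · l · h = h · c · l · h by rewrite hhc.
  have -> : h · c · l · h = h · (c · l · h) by rewrite !mA.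
  by rewrite hF hh.
- have -> : h · r · h = h · r · (c · h) by rewrite hch.
  have -> : h · r · (c · h) = h · (r · c) · h by rewrite !mA.
  by rewrite hE hh.
Qed.

End Semigroup.

Lemma mul1A (S : Type) (mul : S -> S -> S) :
  associative mul -> associative (mul1 mul).
Proof. by move=> mA [a|] [b|] [c|] //=; rewrite mA. Qed.

Lemma inS1_mul1 (S : Type) (mul : S -> S -> S) u v :
  inS1 mul u -> inS1 mul v -> inS1 mul (mul1 mul u v).
Proof. by case: u; case: v. Qed.

Lemma inS1_option_map (S : Type) (mul : S -> S -> S) (f : S -> S) u :
  inS1 mul u -> inS1 mul (option_map f u).
Proof. by case: u. Qed.

Lemma Gamma_node (X : Type) i (l c r : term X) : Gamma i (Node l c r) ->
  exists k, Gamma (S k) l /\ Gamma k c /\ Gamma (S k) r /\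
    (c = tl l \/ c = tr l) /\ (c = tl r \/ c = tr r).
Proof.
case: i => [|[|k]] //=; first by case.
by move=> [Gl [Gc [Gr [_ hc]]]]; exists k.
Qed.

Lemma Gamma_ge2_node (X : Type) i (g : term X) :
  2 <= i -> Gamma i g -> exists l c r, g = Node l c r.
Proof.
case: i => [|[|k]] hi; try lia.
by case: g => [|x|l c r] //= _; exists l, c, r.
Qed.

Lemma sandwich_of_in_sandwich (S : Type) (mul : S -> S -> S) e f h :
  inS1 mul h -> in_sandwich (mul1 mul) e f h -> sandwich mul e f h.
Proof. by move=> hS1 [hh [hf [he hef]]]; do !split. Qed.

Lemma S1_identity_exists (S : Type) (mul : S -> S -> S) :
  exists eps, inS1 mul eps /\
    forall a, mul1 mul eps (Some a) = Some a /\ mul1 mul (Some a) eps = Some a.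
Proof.
have [[e he] | hno] := classic (has_identity mul).
- by exists (Some e); split=> // a /=; rewrite (proj1 (he a)) (proj2 (he a)).
- by exists None.
Qed.

Lemma regular_inverse_fun (S : Type) (mul : S -> S -> S) :
  associative mul -> regular mul ->
  exists inv : S -> S, forall a,
    mul (mul a (inv a)) a = a /\ mul (mul (inv a) a) (inv a) = inv a.
Proof.
move=> mA hreg.
exact: (functional_choice (fun a y => mul (mul a y) a = a /\ mul (mul y a) y = y)
                          (regular_has_inverse mA hreg)).
Qed.

Section SkeletonMap.

Variables (X S : Type) (mul : S -> S -> S).
Hypothesis mA : associative mul.
Variable phi' : X -> S.
Hypothesis phi'_inj : forall x y, phi' x = phi' y -> x = y.
Hypothesis phi'_idem : forall x, idem mul (phi' x).
Variable eps : option S.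
Hypothesis eps_in_S1 : inS1 mul eps.
Hypothesis eps_unit :
  forall a, mul1 mul eps (Some a) = Some a /\ mul1 mul (Some a) eps = Some a.
Variable inv : S -> S.
Hypothesis inv_spec :
  forall a, mul (mul a (inv a)) a = a /\ mul (mul (inv a) a) (inv a) = inv a.

Local Infix "·" := (mul1 mul) (at level 40, left associativity).

Let m1A := mul1A mA.

Lemma option_map_inv_spec u :
  u · option_map inv u · u = u /\ option_map inv u · u · option_map inv u = option_map inv u.
Proof. by case: u => [a|] //=; rewrite (proj1 (inv_spec a)) (proj2 (inv_spec a)). Qed.

Lemma eps_idem : eps · eps = eps.
Proof. by case: eps eps_unit => [e|] // he; rewrite (proj1 (he e)). Qed.

Fixpoint skel (t : term X) : option S :=
  match t with
  | One => eps
  | Atom x => Some (phi' x)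
  | Node l c r =>
      let e := skel r · skel c in
      let f := skel c · skel l in
      f · option_map inv (e · f) · e
  end.

Lemma skel_in_S1 t : inS1 mul (skel t).
Proof.
elim: t => //= l IHl c IHc r IHr.
by do !(apply: inS1_mul1 || apply: inS1_option_map).
Qed.

Lemma skel_node_in_sandwich l c r :
  skel l · skel c · skel l = skel l -> skel r · skel c · skel r = skel r ->
  in_sandwich (mul1 mul) (skel r · skel c) (skel c · skel l) (skel (Node l c r)).
Proof.
move=> hl hr; have [hay hya] := option_map_inv_spec (skel r · skel c · (skel c · skel l)).
apply: in_sandwich_of_inverse => //.
- by rewrite m1A hr.
- by rewrite -m1A (m1A (skel l)) hl.
Qed.

Lemma skel_Gamma i t : Gamma i t ->
  skel t · skel t = skel t /\
  forall d, d = tl t \/ d = tr t -> skel t · skel d · skel t = skel t.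
Proof.
elim: t i => [|x|l IHl c IHc r IHr] i.
- by move=> _; split=> [|d [] ->]; rewrite /= !eps_idem.
- move=> _; have hx : Some (phi' x) · Some (phi' x) = Some (phi' x).
    by rewrite /= phi'_idem.
  by split=> // d [] ->; cbn [tl tr skel]; rewrite (proj2 (eps_unit (phi' x))).
- move=> /Gamma_node [k [Gl [Gc [Gr [hcl hcr]]]]].
  have [_ hl] := IHl _ Gl; have [hC _] := IHc _ Gc; have [_ hr] := IHr _ Gr.
  have hS := skel_node_in_sandwich (hl c hcl) (hr c hcr).
  have [hL hR] := in_sandwich_absorbs m1A hC hS.
  by split=> [|d [] ->]; first by case: hS.
Qed.

Lemma skel_Gamma_sandwich i g : 2 <= i -> Gamma i g ->
  sandwich mul (skel (tr g) · skel (match g with Node _ c _ => c | _ => One end))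
               (skel (match g with Node _ c _ => c | _ => One end) · skel (tl g))
               (skel g).
Proof.
move=> hi Gi; have [l [c [r eg]]] := Gamma_ge2_node hi Gi; subst g.
have [k [Gl [_ [Gr [hcl hcr]]]]] := Gamma_node Gi.
apply: sandwich_of_in_sandwich; first exact: skel_in_S1.
exact: skel_node_in_sandwich (proj2 (skel_Gamma Gl) c hcl) (proj2 (skel_Gamma Gr) c hcr).
Qed.

Lemma skel_skeleton : skeleton mul skel.
Proof.
split; last split; last split; last split.
- move=> g [i Gi]; split; first exact: skel_in_S1.
  by have [] := skel_Gamma Gi.
- by move=> x y [] /phi'_inj.
- by move=> x; exists (phi' x).
- by move=> x; case: (eps_unit (phi' x)) => -> ->.
- exact: skel_Gamma_sandwich.
Qed.

End SkeletonMap.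

Theorem lemma5p3 (X : Type) (S : Type) (mul : S -> S -> S)
  (hX : inhabited X) (hassoc : associative mul) (hreg : regular mul)
  (phi' : X -> S)
  (hinj : forall x y, phi' x = phi' y -> x = y)
  (hidem : forall x, idem mul (phi' x)) :
  exists phi : term X -> option S,
    skeleton mul phi /\ (forall x, phi (Atom x) = Some (phi' x)).
Proof.
have [eps [eps_in_S1 eps_unit]] := S1_identity_exists mul.
have [inv inv_spec] := regular_inverse_fun hassoc hreg.
exists (skel mul phi' eps inv); split; last by [].
exact: skel_skeleton.
Qed.
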